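(* Let $\mathcal{C},\mathcal{D}$ be simplicial models with facets $F$ of $\mathcal{C}$ and $G$ of $\mathcal{D}$, and let $\mathcal{M},\mathcal{N}$ be local epistemic models with worlds $w$ of $\mathcal{M}$ and $v$ of $\mathcal{N}$. Then $\mathcal{C},F$ and $\mathcal{D},G$ are bisimilar iff $\mathtt{LEM}(\mathcal{C}),F$ and $\mathtt{LEM}(\mathcal{D}),G$ are bisimilar; and $\mathcal{M},w$ and $\mathcal{N},v$ are bisimilar iff $\mathtt{SC}(\mathcal{M}),F^{\mathcal M}_w$ and $\mathtt{SC}(\mathcal{N}),F^{\mathcal N}_v$ are bisimilar.
   Context: Fix a nonempty finite set $\mathbf{A}$ of agents and a countable set $\mathbf{P}$ of predicate letters. A simplicial model is $\mathcal{C}=(\mathcal{V},C,\chi,\ell)$: $\mathcal{V}\neq\emptyset$; $C\subseteq\wp(\mathcal{V})$ with $\emptyset\notin C$, closed under nonempty subsets, containing all singletons; $\chi:\mathcal{V}\to\mathbf{A}$ injective on every member of $C$; $\ell:\mathbf{P}\to\wp(\mathcal{V})$; facets $\mathcal{F}(C)$ are the inclusion-maximal members of $C$. A first-order Kripke model is $\mathcal{M}=(W,\delta,\{R_a\}_{a\in\mathbf{A}},\rho)$: $W\neq\emptyset$, $\delta:W\to\wp(\mathbf{A})\setminus\{\emptyset\}$, $R_a\subseteq W\times W$ with $R_a(w)=\emptyset$ if $a\notin\delta(w)$, $\rho:\mathbf{P}\times W\to\wp(\mathbf{A})$ with $\rho(p,w)\subseteq\delta(w)$. $\mathcal{M}$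 is a local epistemic model if: for each $a$ the restriction of $R_a$ to $\{w\mid a\in\delta(w)\}$ is an equivalence relation; $wR_av$ and $a\in\delta(w)$ imply $a\in\delta(v)$; $wR_av$ and $a\in\rho(p,w)$ imply $a\in\rho(p,v)$; $v\in\bigcap_{a\in\delta(w)}R_a(w)$ implies $\delta(v)\subseteq\delta(w)$. $\mathtt{LEM}(\mathcal{C})$ has worlds $\mathcal{F}(C)$, $\delta(F)=\chi[F]$, $R_a=\{(F,G)\mid a\in\chi[F\cap G]\}$, $\rho(p,F)=\chi[F\cap\ell(p)]$. For a local epistemic model $\mathcal{M}$, let $[w]_a=R_a(w)$ and $F^{\mathcal M}_w=\{(a,[w]_a)\mid a\in\delta(w)\}$; $\mathtt{SC}(\mathcal{M})$ has vertices $\{(a,[w]_a)\mid w\in W,a\in\delta(w)\}$, faces the nonempty subsets of the sets $F^{\mathcal M}_w$ ($w\in W$), coloring $(a,[w]_a)\mapsto a$, labeling $\ell(p)=\{(a,[w]_a)\mid a\in\rho(p,w)\}$. Bisimulation between simplicial models $\mathcal{C},\mathcal{D}$: $Z\subseteq\mathcal{F}(C^{\mathcal C})\times\mathcal{F}(C^{\mathcal D})$ such that for $(F,G)\in Z$: (Inv) $\chi^{\mathcal C}[F]=\chi^{\mathcal D}[G]$ and $\chi^{\mathcal C}[F\cap\ell^{\mathcal C}(p)]=\chi^{\mathcal D}[G\cap\ell^{\mathcal D}(p)]$ for all $p$; (Zig) for all $A\subseteq\mathbf{A}$ and facets $F'$ with $A\subseteq\chi^{\mathcal C}[F\cap F']$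 there is a facet $G'$ with $A\subseteq\chi^{\mathcal D}[G\cap G']$ and $(F',G')\in Z$; (Zag) symmetric. Bisimulation between Kripke models $\mathcal{M},\mathcal{N}$: $Z\subseteq W^{\mathcal M}\times W^{\mathcal N}$ such that for $(w,v)\in Z$: (Inv) $\delta^{\mathcal M}(w)=\delta^{\mathcal N}(v)$ and $\rho^{\mathcal M}(p,w)=\rho^{\mathcal N}(p,v)$ for all $p$; (Zig) for all $A\subseteq\mathbf{A}$ and $w'\in\bigcap_{a\in A}R^{\mathcal M}_a(w)$ there is $v'\in\bigcap_{a\in A}R^{\mathcal N}_a(v)$ with $(w',v')\in Z$; (Zag) symmetric (the empty intersection is the whole set of worlds). Pointed models are bisimilar if some bisimulation relates the points. *)

From mathcomp Require Import ssreflect ssrfun ssrbool eqtype ssrnat choice fintype.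
Set Implicit Arguments. Unset Strict Implicit. Unset Printing Implicit Defensive.

(* Sets are represented as predicates (X : T -> Prop); equality of sets of
   agents in the (Inv) clauses is extensional (pointwise <->). *)

Section Models.
Variables (Ag : finType) (P : countType).

Record smodel := SModel {
  sV : Type;
  sC : (sV -> Prop) -> Prop;
  schi : sV -> Ag;
  sell : P -> sV -> Prop
}.
Arguments sC : clear implicits. Arguments schi : clear implicits.
Arguments sell : clear implicits.

Definition is_smodel (C : smodel) : Prop :=
  inhabited (sV C) /\
  (forall X, sC C X -> exists x, X x) /\
  (forall X Y, sC C X -> (forall x, Y x -> X x) -> (exists y, Y y) -> sC C Y) /\
  (forall x : sV C, sC C (fun y => y = x)) /\
  (forall X, sC C X -> forall x y, X x -> X y -> schi C x = schi C y -> x = y).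

Definition is_facet (C : smodel) (F : sV C -> Prop) : Prop :=
  sC C F /\ forall G, sC C G -> (forall x, F x -> G x) -> forall x, G x -> F x.

Definition facet (C : smodel) := {F : sV C -> Prop | is_facet F}.

Definition chimg (C : smodel) (X : sV C -> Prop) : Ag -> Prop :=
  fun a => exists x, X x /\ schi C x = a.

Definition inter T (X Y : T -> Prop) : T -> Prop := fun x => X x /\ Y x.

Definition sbisim (C D : smodel) (Z : facet C -> facet D -> Prop) : Prop :=
  forall (F : facet C) (G : facet D), Z F G ->
  ((forall a, chimg (sval F) a <-> chimg (sval G) a) /\
   (forall p a, chimg (inter (sval F) (sell C p)) a <->
                chimg (inter (sval G) (sell D p)) a)) /\
  (forall (B : Ag -> Prop) (F' : facet C),
     (forall a, B a -> chimg (inter (sval F) (sval F')) a) ->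
     exists G' : facet D,
       (forall a, B a -> chimg (inter (sval G) (sval G')) a) /\ Z F' G') /\
  (forall (B : Ag -> Prop) (G' : facet D),
     (forall a, B a -> chimg (inter (sval G) (sval G')) a) ->
     exists F' : facet C,
       (forall a, B a -> chimg (inter (sval F) (sval F')) a) /\ Z F' G').

Definition sbisimilar (C D : smodel) (F : facet C) (G : facet D) : Prop :=
  exists Z, sbisim Z /\ Z F G.

Record kmodel := KModel {
  kW : Type;
  kdelta : kW -> Ag -> Prop;
  kR : Ag -> kW -> kW -> Prop;
  krho : P -> kW -> Ag -> Prop
}.
Arguments kdelta : clear implicits. Arguments kR : clear implicits.
Arguments krho : clear implicits.

Definition is_kmodel (M : kmodel) : Prop :=
  inhabited (kW M) /\
  (forall w, exists a, kdelta M w a) /\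
  (forall a w v, kR M a w v -> kdelta M w a) /\
  (forall p w a, krho M p w a -> kdelta M w a).

Definition is_local_epistemic (M : kmodel) : Prop :=
  is_kmodel M /\
  (forall a,
     (forall w, kdelta M w a -> kR M a w w) /\
     (forall w v, kdelta M w a -> kdelta M v a -> kR M a w v -> kR M a v w) /\
     (forall w v u, kdelta M w a -> kdelta M v a -> kdelta M u a ->
                    kR M a w v -> kR M a v u -> kR M a w u)) /\
  (forall a w v, kR M a w v -> kdelta M w a -> kdelta M v a) /\
  (forall a p w v, kR M a w v -> krho M p w a -> krho M p v a) /\
  (forall w v, (forall a, kdelta M w a -> kR M a w v) ->
               forall a, kdelta M v a -> kdelta M w a).

Definition kbisim (M N : kmodel) (Z : kW M -> kW N -> Prop) : Prop :=
  forall w v, Z w v ->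
  ((forall a, kdelta M w a <-> kdelta N v a) /\
   (forall p a, krho M p w a <-> krho N p v a)) /\
  (forall (B : Ag -> Prop) (w' : kW M), (forall a, B a -> kR M a w w') ->
     exists v' : kW N, (forall a, B a -> kR N a v v') /\ Z w' v') /\
  (forall (B : Ag -> Prop) (v' : kW N), (forall a, B a -> kR N a v v') ->
     exists w' : kW M, (forall a, B a -> kR M a w w') /\ Z w' v').

Definition kbisimilar (M N : kmodel) (w : kW M) (v : kW N) : Prop :=
  exists Z, kbisim Z /\ Z w v.

Definition LEM (C : smodel) : kmodel :=
  @KModel (facet C)
    (fun F => chimg (sval F))
    (fun a F G => chimg (inter (sval F) (sval G)) a)
    (fun p F => chimg (inter (sval F) (sell C p))).

(* vertices (a, [w]_a) with a ∈ δ(w), where [w]_a = R_a(w) as a set of worlds *)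
Definition SCvert (M : kmodel) :=
  {x : Ag * (kW M -> Prop) | exists w, kdelta M w x.1 /\ x.2 = kR M x.1 w}.

Definition Fw (M : kmodel) (w : kW M) : SCvert M -> Prop :=
  fun x => kdelta M w (sval x).1 /\ (sval x).2 = kR M (sval x).1 w.

Definition SC (M : kmodel) : smodel :=
  @SModel (SCvert M)
    (fun X => (exists x, X x) /\ exists w, forall x, X x -> Fw w x)
    (fun x => (sval x).1)
    (fun p x => exists w, krho M p w (sval x).1 /\ (sval x).2 = kR M (sval x).1 w).

End Models.

From mathcomp Require Import ssreflect ssrfun ssrbool eqtype ssrnat choice fintype.
From Stdlib Require Import FunctionalExtensionality PropExtensionality.
Set Implicit Arguments. Unset Strict Implicit.

(* Since each R_a is an equivalence on the worlds where a is defined and δ is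
   local, every F_w is a facet of SC(M), every facet is some F_w, and F_w turns
   δ, ρ and R_a into χ[F], χ[F ∩ ℓ(p)] and a ∈ χ[F ∩ G].  Hence the relation
   "X = F_w" is itself a bisimulation between M and LEM(SC(M)), and the second
   equivalence follows by composing bisimulations.  The first equivalence holds
   by definition: the simplicial clauses are the Kripke clauses read in LEM(C). *)

Arguments kR {Ag P}. Arguments kdelta {Ag P}. Arguments krho {Ag P}.
Arguments sell {Ag P}.

Section Bisimulation.
Variables (Ag : finType) (P : countType).
Implicit Types M N K : kmodel Ag P.

Lemma sbisimilar_LEM (C D : smodel Ag P) (F : facet C) (G : facet D) :
  sbisimilar F G <-> kbisimilar (M := LEM C) (N := LEM D) F G.
Proof. by []. Qed.

Lemma kbisim_converse M N (Z : kW M -> kW N -> Prop) :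
  kbisim Z -> kbisim (fun v w => Z w v).
Proof.
move=> HZ v w Zwv; have [[Zdelta Zrho] [Zzig Zzag]] := HZ _ _ Zwv.
split; [split|split] => //.
- by move=> a; apply: iff_sym.
- by move=> p a; apply: iff_sym.
Qed.

Lemma kbisim_comp M N K (Z1 : kW M -> kW N -> Prop) (Z2 : kW N -> kW K -> Prop) :
  kbisim Z1 -> kbisim Z2 -> kbisim (fun u w => exists2 v, Z1 u v & Z2 v w).
Proof.
move=> HZ1 HZ2 u w [v Z1uv Z2vw].
have [[delta1 rho1] [zig1 zag1]] := HZ1 _ _ Z1uv.
have [[delta2 rho2] [zig2 zag2]] := HZ2 _ _ Z2vw.
split; [split|split].
- by move=> a; apply: iff_trans (delta1 a) (delta2 a).
- by move=> p a; apply: iff_trans (rho1 p a) (rho2 p a).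
- move=> B u' /zig1 [v' [/zig2 [w' [Hw' Z2']] Z1']].
  by exists w'; split=> //; exists v'.
- move=> B w' /zag2 [v' [/zag1 [u' [Hu' Z1']] Z2']].
  by exists u'; split=> //; exists v'.
Qed.

Lemma kbisimilar_sym M N (w : kW M) (v : kW N) :
  kbisimilar w v -> kbisimilar v w.
Proof. by move=> [Z [HZ Zwv]]; exists (fun v w => Z w v); split; first exact: kbisim_converse. Qed.

Lemma kbisimilar_trans M N K (u : kW M) (v : kW N) (w : kW K) :
  kbisimilar u v -> kbisimilar v w -> kbisimilar u w.
Proof.
move=> [Z1 [HZ1 Z1uv]] [Z2 [HZ2 Z2vw]].
by exists (fun u w => exists2 v, Z1 u v & Z2 v w); split; [exact: kbisim_comp | exists v].
Qed.

Lemma kbisimilar_transfer M N M' N' (Z : kW M -> kW N -> Prop)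
    (Z' : kW M' -> kW N' -> Prop) w v w' v' :
  kbisim Z -> kbisim Z' -> Z w v -> Z' w' v' ->
  kbisimilar w w' <-> kbisimilar v v'.
Proof.
move=> HZ HZ' Zwv Z'w'v'.
have Hwv : kbisimilar w v by exists Z.
have Hw'v' : kbisimilar w' v' by exists Z'.
split=> H.
- exact: kbisimilar_trans (kbisimilar_trans (kbisimilar_sym Hwv) H) Hw'v'.
- exact: kbisimilar_trans (kbisimilar_trans Hwv H) (kbisimilar_sym Hw'v').
Qed.

Section Correspondence.
Variables (M N : kmodel Ag P) (E : kW M -> kW N -> Prop).
Hypotheses (E_total : forall w, exists v, E w v) (E_onto : forall v, exists w, E w v).
Hypothesis E_delta : forall w v, E w v -> forall a, kdelta M w a <-> kdelta N v a.
Hypothesis E_rho : forall w v, E w v -> forall p a, krho M p w a <-> krho N p v a.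
Hypothesis E_R : forall w v w' v', E w v -> E w' v' ->
  forall a, kR M a w w' <-> kR N a v v'.

Lemma kbisim_correspondence : kbisim E.
Proof.
move=> w v Ewv; split; [split|split].
- exact: E_delta.
- exact: E_rho.
- move=> B w' HB; have [v' Ew'v'] := E_total w'.
  by exists v'; split=> // a /HB /(E_R Ewv Ew'v').
- move=> B v' HB; have [w' Ew'v'] := E_onto v'.
  by exists w'; split=> // a /HB /(E_R Ewv Ew'v').
Qed.

End Correspondence.
End Bisimulation.

Section LocalEpistemic.
Variables (Ag : finType) (P : countType) (M : kmodel Ag P).
Hypothesis HM : is_local_epistemic M.

Lemma kdelta_exists w : exists a, kdelta M w a.
Proof. by case: HM => [[_ []]]. Qed.

Lemma kR_kdelta_l a w u : kR M a w u -> kdelta M w a.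
Proof. by case: HM => [[_ [_ [HRdom _]]] _]; apply: HRdom. Qed.

Lemma kR_kdelta_r a w u : kR M a w u -> kdelta M u a.
Proof. by move=> Hwu; case: HM => _ [_ [Hmono _]]; apply: Hmono Hwu (kR_kdelta_l Hwu). Qed.

Lemma krho_kdelta p w a : krho M p w a -> kdelta M w a.
Proof. by case: HM => [[_ [_ [_ Hrhodom]]] _]; apply: Hrhodom. Qed.

Lemma kR_refl a w : kdelta M w a -> kR M a w w.
Proof. by case: HM => _ [/(_ a) [Hrefl _] _]; apply: Hrefl. Qed.

Lemma kR_sym a w u : kR M a w u -> kR M a u w.
Proof.
move=> Hwu; case: HM => _ [/(_ a) [_ [Hsym _]] _].
exact: Hsym (kR_kdelta_l Hwu) (kR_kdelta_r Hwu) Hwu.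
Qed.

Lemma kR_trans a w u t : kR M a w u -> kR M a u t -> kR M a w t.
Proof.
move=> Hwu Hut; case: HM => _ [/(_ a) [_ [_ Htrans]] _].
exact: Htrans (kR_kdelta_l Hwu) (kR_kdelta_l Hut) (kR_kdelta_r Hut) Hwu Hut.
Qed.

Lemma kR_class a w u : kR M a w u -> kR M a w = kR M a u.
Proof.
move=> Hwu; apply: functional_extensionality => t.
apply: propositional_extensionality; split; first exact: kR_trans (kR_sym Hwu).
exact: kR_trans Hwu.
Qed.

Lemma krho_kR p a w u : kR M a w u -> krho M p w a -> krho M p u a.
Proof. by case: HM => _ [_ [_ [Hrho _]]]; apply: Hrho. Qed.

Lemma kdelta_local w u :
  (forall a, kdelta M w a -> kR M a w u) -> forall a, kdelta M u a -> kdelta M w a.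
Proof. by case: HM => _ [_ [_ [_ Hloc]]]; apply: Hloc. Qed.

Definition SCvert_of a w (Hwa : kdelta M w a) : SCvert M :=
  exist _ (a, kR M a w) (ex_intro _ w (conj Hwa erefl)).

Lemma Fw_SCvert_of a w (Hwa : kdelta M w a) : Fw w (SCvert_of Hwa).
Proof. by []. Qed.

Lemma Fw_maximal (w u : kW M) : (forall x, Fw w x -> Fw u x) -> forall x, Fw u x -> Fw w x.
Proof.
move=> Hsub [[b S] HbS] [/= Hub eS].
have Hclass a : kdelta M w a -> kdelta M u a /\ kR M a w = kR M a u.
  by move=> Hwa; have [] := Hsub _ (Fw_SCvert_of Hwa).
have Hwb : kdelta M w b.
  apply: (kdelta_local _ Hub) => a /Hclass [Hua ->].
  exact: kR_refl.
by split=> //=; rewrite eS; have [_ ->] := Hclass b Hwb.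
Qed.

Lemma is_facet_Fw (w : kW M) : is_facet (C := SC M) (Fw w).
Proof.
have [a Hwa] := kdelta_exists w.
split; first by split; [exists (SCvert_of Hwa) | exists w].
move=> G [_ [u HGu]] Hsub x Gx.
by apply: (@Fw_maximal w u) (HGu _ Gx) => y /Hsub /HGu.
Qed.

Lemma facet_SC_Fw (X : facet (SC M)) : exists w, sval X = Fw w.
Proof.
case: X => X [[_ [w HXw]] Hmax] /=; exists w.
apply: functional_extensionality => x; apply: propositional_extensionality.
split; first exact: HXw.
apply: Hmax => //; split; last by exists w.
by have [a Hwa] := kdelta_exists w; exists (SCvert_of Hwa).
Qed.

Lemma chimg_Fw (w : kW M) a : chimg (C := SC M) (Fw w) a <-> kdelta M w a.
Proof.
split; first by move=> [x [[Hwx _] <-]].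
by move=> Hwa; exists (SCvert_of Hwa).
Qed.

Lemma chimg_Fw_sell (w : kW M) p a :
  chimg (C := SC M) (inter (Fw w) (sell (SC M) p)) a <-> krho M p w a.
Proof.
split.
- move=> [[[b S] HbS] [[[/= Hwb eSw] [u [/= Hub eSu]]] /= <-]].
  by apply: krho_kR Hub; rewrite -eSu eSw; apply: kR_refl.
- move=> Hrho; have Hwa := krho_kdelta Hrho.
  by exists (SCvert_of Hwa); split=> //; split=> //; exists w.
Qed.

Lemma chimg_Fw_Fw (w u : kW M) a :
  chimg (C := SC M) (inter (Fw w) (Fw u)) a <-> kR M a w u.
Proof.
split.
- move=> [[[b S] HbS] [[[/= Hwb eSw] [/= Hub eSu]] /= <-]].
  by rewrite -eSw eSu; apply: kR_refl.
- move=> Hwu; exists (SCvert_of (kR_kdelta_l Hwu)).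
  split=> //; split; first exact: Fw_SCvert_of.
  by split; [exact: kR_kdelta_r Hwu | exact: kR_class Hwu].
Qed.

Lemma kbisim_Fw : kbisim (M := M) (N := LEM (SC M)) (fun w X => sval X = Fw w).
Proof.
apply: kbisim_correspondence.
- by move=> w; exists (exist _ (Fw w) (is_facet_Fw w)).
- by move=> X; have [w ->] := facet_SC_Fw X; exists w.
- by move=> w X /= -> a; apply: iff_sym (chimg_Fw w a).
- by move=> w X /= -> p a; apply: iff_sym (chimg_Fw_sell w p a).
- by move=> w X u Y /= -> -> a; apply: iff_sym (chimg_Fw_Fw w u a).
Qed.

End LocalEpistemic.

Theorem proposition4 (Ag : finType) (P : countType) (hAg : 0 < #|Ag|) :
  (forall (C D : smodel Ag P), is_smodel C -> is_smodel D ->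
     forall (F : facet C) (G : facet D),
       sbisimilar F G <-> kbisimilar (M := LEM C) (N := LEM D) F G) /\
  (forall (M N : kmodel Ag P), is_local_epistemic M -> is_local_epistemic N ->
     forall (w : kW M) (v : kW N),
       kbisimilar w v <->
       exists (HF : is_facet (C := SC M) (Fw w)) (HG : is_facet (C := SC N) (Fw v)),
         sbisimilar (C := SC M) (D := SC N) (exist _ (Fw w) HF) (exist _ (Fw v) HG)).
Proof.
split=> [C D _ _ F G | M N HM HN w v]; first exact: sbisimilar_LEM.
have transfer HF HG := kbisimilar_transfer (kbisim_Fw HM) (kbisim_Fw HN)
  (erefl : sval (exist _ (Fw w) HF) = Fw w) (erefl : sval (exist _ (Fw v) HG) = Fw v).
split=> [Hwv | [HF [HG Hbisim]]].
- exists (is_facet_Fw HM w), (is_facet_Fw HN v).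
  exact/sbisimilar_LEM/transfer.
- exact/(transfer HF HG)/sbisimilar_LEM.
Qed.
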